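(* Let $k$ be a field and let $A = H_{\bullet}(\overline{M}_{0,5})$ be the homology ring (isomorphic to the Chow ring) of the moduli space $\overline{M}_{0,5}$ of stable $5$-pointed curves of genus zero, graded so that the classes $D^S$ of boundary divisors have degree $1$. Then $A$ is a Koszul algebra.
   Context: By Keel's presentation, for $n\ge 4$ the ring $H_{\bullet}(\overline{M}_{0,n})$ is the commutative graded $k$-algebra generated in degree $1$ by variables $D^S$, indexed by subsets $S\subset\{1,\dots,n\}$ with $|S|\ge 2$ and $|S^C|\ge 2$, with $D^S=D^{S^C}$, subject to the relations: (1) for any four distinct $i,j,k,l\in\{1,\dots,n\}$, $\sum_{i,j\in S,\,k,l\notin S} D^S=\sum_{i,k\in S,\,j,l\notin S} D^S=\sum_{i,l\in S,\,j,k\notin S} D^S$; (2) $D^SD^T=0$ unless $S\subset T$, $T\subset S$, $S\subset T^C$, or $T^C\subset S$. A quadratic graded algebra is Koszul if its trivial module $k$ admits a linear graded free resolution. *)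

From HB Require Import structures.
From mathcomp Require Import all_boot all_order all_algebra.
From mathcomp Require Import mpoly.
Set Implicit Arguments.
Unset Strict Implicit.
Unset Printing Implicit Defensive.
Import GRing.Theory.
Local Open Scope ring_scope.

Section Keel.
Variables (k : fieldType) (n : nat).

(* Ambient free commutative polynomial ring: one variable per subset S of
   {1..n} (encoded as 'I_n).  The variable for S is D S. *)
Definition keel_nvar := #|{: {set 'I_n}}|.
Definition KPoly := {mpoly k[keel_nvar]}.
Definition D (S : {set 'I_n}) : KPoly := 'X_(enum_rank S).

(* S indexes a genuine boundary divisor: |S| >= 2 and |S^C| >= 2. *)
Definition keel_valid (S : {set 'I_n}) : bool := (2 <= #|S|)%N && (2 <= #|~: S|)%N.

Definition keel_compat (S T : {set 'I_n}) : bool :=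
  [|| S \subset T, T \subset S, S \subset ~: T | ~: T \subset S].

Definition keel_sum (i j k' l : 'I_n) : KPoly :=
  \sum_(S : {set 'I_n} | [&& i \in S, j \in S, k' \notin S & l \notin S]) D S.

(* Generators of the ideal of relations of Keel's presentation:
   - D^S = 0 for subsets S not indexing a divisor (only valid S are generators),
   - D^S = D^{S^C},
   - relation (1) for four distinct indices,
   - relation (2): D^S D^T = 0 for incompatible valid S, T. *)
Definition keel_gen (p : KPoly) : Prop :=
  [\/ (exists S, ~~ keel_valid S /\ p = D S),
      (exists S, p = D S - D (~: S)),
      (exists i j k' l, uniq [:: i; j; k'; l] /\
                        (p = keel_sum i j k' l - keel_sum i k' j l \/
                         p = keel_sum i k' j l - keel_sum i l j k'))
    | (exists S T, [/\ keel_valid S, keel_valid T, ~~ keel_compat S T & p = D S * D T])].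

(* The ideal I generated by keel_gen; A = KPoly / I is Keel's presentation of
   H_*(Mbar_{0,n}), graded by polynomial degree (all generators D^S in degree 1). *)
Definition keel_ideal (p : KPoly) : Prop :=
  exists s : seq (KPoly * KPoly),
    (forall x, x \in s -> keel_gen x.2) /\ p = \sum_(x <- s) x.1 * x.2.

(* Vectors/matrices over KPoly represent elements/maps of free A-modules
   (equality in A^b is congruence modulo I entrywise). *)
Definition vec_in_ideal b (v : 'rV[KPoly]_b) : Prop := forall j, keel_ideal (v 0 j).

(* A linear graded free resolution of the trivial module k over A:
   F_i = A(-i)^(b i) (free, generated in degree i), differential
   d_i : F_(i+1) -> F_i, v |-> v *m M i, with M i a matrix of linear forms
   (degree-0 graded maps A(-i-1)^b' -> A(-i)^b are exactly such matrices),
   augmentation eps : F_0 -> k, eps v = sum_j c_j * (constant term of v_j),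
   and the augmented complex ... -> F_1 -> F_0 -> k -> 0 exact. *)
Definition has_linear_free_resolution : Prop :=
  exists (b : nat -> nat) (c : 'rV[k]_(b 0%N)) (M : forall i, 'M[KPoly]_(b i.+1, b i)),
    [/\ c != 0,                                   (* eps surjective *)
        forall i r s, M i r s \is 1.-homog,
        forall i, forall r s, keel_ideal ((M i.+1 *m M i) r s),
        forall v : 'rV[KPoly]_(b 0%N),
          \sum_j c 0 j * (v 0 j)@_0%MM = 0 ->
          exists w : 'rV[KPoly]_(b 1%N), vec_in_ideal (v - w *m M 0%N)
      & forall i (v : 'rV[KPoly]_(b i.+1)),
          vec_in_ideal (v *m M i) ->
          exists w : 'rV[KPoly]_(b i.+2), vec_in_ideal (v - w *m M i.+1)].

Definition keel_koszul : Prop := has_linear_free_resolution.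

End Keel.

(* Keel's ring for five points is the cohomology ring of the blow-up of the
   plane in four points: [k] in degree 0, the Picard group [V = k^5] in degree
   1 and [k] in degree 2, the product [V * V -> k] being the intersection form,
   which is nondegenerate.  Evaluating the generators [D^S] at their divisor
   classes identifies Keel's ideal with the kernel of the evaluation, because
   every polynomial is congruent to an explicit lift of its value.
   Over such an algebra a linear resolution is built one degree at a time:
   the generators of [F_(i+1)] form a basis of the degree-[(i+1)] cycles of
   [F_i].  Exactness in the top degree then propagates by induction because
   every vector [p] is orthogonal to some [g] that pairs to [1] with some
   vector, which needs the form to be nondegenerate of rank at least two. *)

From HB Require Import structures.
From mathcomp Require Import all_boot all_order all_algebra.
From mathcomp Require Import mpoly ring zify.
Set Implicit Arguments.
Unset Strict Implicit.
Unset Printing Implicit Defensive.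
Import GRing.Theory.
Local Open Scope ring_scope.

(* The graded algebra [k ++ V ++ k] with [V * V -> k] given by the diagonal
   form of weights [w]; [w] only enters through the ring structure below. *)
Definition qalg (k : fieldType) m (w : 'I_m -> k) : Type := (k * 'rV[k]_m * k)%type.

Section QuadricAlgebra.
Variables (k : fieldType) (m : nat) (w : 'I_m -> k).
Local Notation V := 'rV[k]_m.

Definition qform (x y : V) : k := \sum_c w c * x 0 c * y 0 c.

Lemma qformC x y : qform x y = qform y x.
Proof. by apply: eq_bigr => c _; rewrite -!mulrA [y 0 c * _]mulrC. Qed.

Lemma qformDl x y z : qform (x + y) z = qform x z + qform y z.
Proof. by rewrite -big_split; apply: eq_bigr => c _; rewrite !mxE mulrDr mulrDl. Qed.

Lemma qformZl a x z : qform (a *: x) z = a * qform x z.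
Proof. by rewrite mulr_sumr; apply: eq_bigr => c _; rewrite mxE /=; ring. Qed.

Lemma qformDr x y z : qform z (x + y) = qform z x + qform z y.
Proof. by rewrite qformC qformDl !(qformC z). Qed.

Lemma qformZr a x z : qform z (a *: x) = a * qform z x.
Proof. by rewrite qformC qformZl qformC. Qed.

Lemma qform0l z : qform 0 z = 0.
Proof. by rewrite -(scale0r 0) qformZl mul0r. Qed.

Lemma qformNl x z : qform (- x) z = - qform x z.
Proof. by rewrite -scaleN1r qformZl mulN1r. Qed.

Lemma qformNr x z : qform z (- x) = - qform z x.
Proof. by rewrite qformC qformNl qformC. Qed.

Lemma qform_suml I (r : seq I) P (F : I -> V) z :
  qform (\sum_(i <- r | P i) F i) z = \sum_(i <- r | P i) qform (F i) z.
Proof. by elim/big_rec2: _ => [|i y1 y2 _ <-]; rewrite ?qform0l ?qformDl. Qed.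

Lemma qform_sumr I (r : seq I) P (F : I -> V) z :
  qform z (\sum_(i <- r | P i) F i) = \sum_(i <- r | P i) qform z (F i).
Proof. by rewrite qformC qform_suml; apply: eq_bigr => i _; rewrite qformC. Qed.

Lemma qform_delta x c : qform x (delta_mx 0 c) = w c * x 0 c.
Proof.
rewrite /qform (bigD1 c) //= big1 ?addr0; first by rewrite mxE !eqxx mulr1.
by move=> d /negbTE hd; rewrite mxE hd andbF mulr0.
Qed.

HB.instance Definition _ := GRing.Zmodule.on (qalg w).

Definition qalg_mul (x y : qalg w) : qalg w :=
  (x.1.1 * y.1.1, x.1.1 *: y.1.2 + y.1.1 *: x.1.2,
   x.1.1 * y.2 + y.1.1 * x.2 + qform x.1.2 y.1.2).

Lemma qalg_mulA : associative qalg_mul.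
Proof.
case=> [[a1 v1] c1] [[a2 v2] c2] [[a3 v3] c3]; rewrite /qalg_mul /=.
congr (_, _, _); first by rewrite mulrA.
  by rewrite !scalerDr !scalerA -addrA [a3 * a1]mulrC [a3 * a2]mulrC.
rewrite ?qformDl ?qformDr !qformZl !qformZr; ring.
Qed.

Lemma qalg_mulC : commutative qalg_mul.
Proof.
case=> [[a1 v1] c1] [[a2 v2] c2]; rewrite /qalg_mul /= mulrC qformC.
by congr (_, _, _); [exact: addrC | congr (_ + _); exact: addrC].
Qed.

Lemma qalg_mul1 : left_id (1, 0, 0) qalg_mul.
Proof.
case=> [[a v] c]; rewrite /qalg_mul /= scale1r scaler0 addr0 qform0l.
by rewrite !mul1r mulr0 !addr0.
Qed.

Lemma qalg_mulDl : left_distributive qalg_mul +%R.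
Proof.
case=> [[a1 v1] c1] [[a2 v2] c2] [[a3 v3] c3]; rewrite /qalg_mul /=.
congr (_, _, _); first by rewrite mulrDl.
  by rewrite scalerDl scalerDr addrACA.
rewrite qformDl /=; ring.
Qed.

Lemma qalg_one_neq0 : (1, 0, 0) != 0 :> qalg w.
Proof. by apply/eqP => /(congr1 (fun x : qalg w => x.1.1)) /eqP; rewrite oner_eq0. Qed.

HB.instance Definition _ := GRing.Zmodule_isComNzRing.Build (qalg w)
  qalg_mulA qalg_mulC qalg_mul1 qalg_mulDl qalg_one_neq0.

Lemma qalg_mulE (x y : qalg w) : x * y =
  (x.1.1 * y.1.1, x.1.1 *: y.1.2 + y.1.1 *: x.1.2,
   x.1.1 * y.2 + y.1.1 * x.2 + qform x.1.2 y.1.2).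
Proof. by []. Qed.

Lemma qalg_oneE : (1 : qalg w) = (1, 0, 0).
Proof. by []. Qed.

Lemma qalg_addE (a1 a2 c1 c2 : k) (v1 v2 : V) :
  ((a1, v1, c1) : qalg w) + (a2, v2, c2) = (a1 + a2, v1 + v2, c1 + c2).
Proof. by []. Qed.

Lemma qalg_sumE (J : Type) (r : seq J) (P : pred J) (F : J -> qalg w) :
  \sum_(j <- r | P j) F j =
  (\sum_(j <- r | P j) (F j).1.1, \sum_(j <- r | P j) (F j).1.2,
   \sum_(j <- r | P j) (F j).2).
Proof.
elim: r => [|j r IH]; first by rewrite !big_nil.
by rewrite !big_cons; case: (P j) => //; rewrite IH; case: (F j) => [[]].
Qed.

Lemma qalg_mul_deg1 (x : qalg w) (v : V) :
  x * (0, v, 0) = (0, x.1.1 *: v, qform x.1.2 v).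
Proof.
by case: x => [[a u] c]; rewrite qalg_mulE /= !mulr0 scale0r addr0 mul0r !addr0 add0r.
Qed.

End QuadricAlgebra.

Section LinearResolution.
Variables (k : fieldType) (m : nat) (w : 'I_m.+2 -> k).
Hypothesis w_neq0 : forall c, w c != 0.
Local Notation V := 'rV[k]_m.+2.
Local Notation qform := (qform w).

Lemma qform_unit (g : V) c : g 0 c != 0 -> exists u, qform g u = 1.
Proof.
move=> gc; exists ((w c * g 0 c)^-1 *: delta_mx 0 c).
by rewrite qformZr qform_delta mulVf // mulf_neq0.
Qed.

Lemma qform_orth_unit (p : V) : exists g, qform g p = 0 /\ exists u, qform g u = 1.
Proof.
have [p1|p1] := eqVneq (p 0 1) 0.
  exists (delta_mx 0 1); split; first by rewrite qformC qform_delta p1 mulr0.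
  by apply: (@qform_unit _ 1); rewrite mxE !eqxx oner_eq0.
exists ((w 1 * p 0 1) *: delta_mx 0 0 - (w 0 * p 0 0) *: delta_mx 0 1); split.
  by rewrite qformDl qformNl !qformZl !(qformC w _ p) !qform_delta; ring.
by apply: (@qform_unit _ 0); rewrite !mxE /= mulr1 mulr0 subr0 mulf_neq0.
Qed.

(* A differential [A(-i-1)^rank_out -> A(-i)^rank_in] with entries in [V]. *)
Record stage := Stage {
  rank_in : nat; rank_out : nat; dcoef : 'I_rank_out -> 'I_rank_in -> V }.
Arguments dcoef : clear implicits.

Section NextStage.
Variable s : stage.

(* The differential in the top internal degree, where a source element is one
   vector of [V] per generator and its image has coordinates in [A_2 = k]. *)
Definition dsocle (z : 'M[k]_(rank_out s, m.+2)) : 'rV[k]_(rank_in s) :=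
  \row_t \sum_r qform (row r z) (dcoef s r t).

Fact dsocle_is_linear : linear dsocle.
Proof.
move=> a x y; apply/rowP => t; rewrite !mxE mulr_sumr -big_split /=.
by apply: eq_bigr => r _; rewrite linearD linearZ /= qformDl qformZl.
Qed.
HB.instance Definition _ := GRing.isLinear.Build k _ _ _ dsocle dsocle_is_linear.

Definition cycles : {vspace 'M[k]_(rank_out s, m.+2)} := lker (linfun dsocle).

Lemma mem_cycles z :
  (z \in cycles) = [forall t, \sum_r qform (row r z) (dcoef s r t) == 0].
Proof.
rewrite memv_ker lfunE; apply/eqP/forallP => [/rowP h t|h].
  by move: (h t); rewrite !mxE => ->.
by apply/rowP => t; rewrite !mxE; apply/eqP.
Qed.

Definition next_stage : stage :=
  Stage (fun (j : 'I_(\dim cycles)) r => row r (vbasis cycles)`_j).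

Lemma next_stage_complex j t :
  \sum_r qform (dcoef next_stage j r) (dcoef s r t) = 0.
Proof.
have : (vbasis cycles)`_j \in cycles.
  by apply/vbasis_mem/mem_nth; rewrite size_tuple.
by rewrite mem_cycles => /forallP/(_ t)/eqP.
Qed.

Lemma cycles_span (u : 'I_(rank_out s) -> V) :
  (forall t, \sum_r qform (u r) (dcoef s r t) = 0) ->
  exists a : 'I_(rank_out next_stage) -> k,
    forall r, u r = \sum_j a j *: dcoef next_stage j r.
Proof.
move=> hu; pose z : 'M[k]_(rank_out s, m.+2) := \matrix_r u r.
have zZ : z \in cycles.
  rewrite mem_cycles; apply/forallP => t; apply/eqP; rewrite -[RHS](hu t).
  by apply: eq_bigr => r _; rewrite rowK.
exists (fun j => coord (vbasis cycles) j z) => r.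
rewrite -[u r](rowK u) -/z {1}(coord_vbasis zZ) linear_sum.
by apply: eq_bigr => j _; rewrite linearZ.
Qed.

End NextStage.

Definition dcoef_free (s : stage) := forall a : 'I_(rank_out s) -> k,
  (forall t, \sum_r a r *: dcoef s r t = 0) -> forall r, a r = 0.

(* Surjectivity of [dsocle] already on generator vectors orthogonal to any
   given [p]; this strengthening is what propagates along [next_stage]. *)
Definition perp_onto (s : stage) := forall (p : V) (y : 'I_(rank_in s) -> k),
  exists z : 'I_(rank_out s) -> V, (forall r, qform (z r) p = 0) /\
    forall t, \sum_r qform (z r) (dcoef s r t) = y t.

Lemma next_stage_free s : dcoef_free (next_stage s).
Proof.
move=> a ha; have /freeP := basis_free (vbasisP (cycles s)); apply.
apply/row_matrixP => r; rewrite linear_sum /= row0 -[RHS](ha r).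
by apply: eq_bigr => j _; rewrite linearZ.
Qed.

Lemma next_stage_perp_onto s : perp_onto s -> perp_onto (next_stage s).
Proof.
move=> hs p y; have [g [gp [u gu]]] := qform_orth_unit p.
(* Correct [y r *: u] into a cycle by a solution orthogonal to [g]; pairing
   that cycle with [g] then gives back [y]. *)
have [z [zg zy]] := hs g (fun t => - \sum_r y r * qform u (dcoef s r t)).
have cyc t : \sum_r qform (y r *: u + z r) (dcoef s r t) = 0.
  under eq_bigr do rewrite qformDl qformZl.
  by rewrite big_split /= zy subrr.
have [a ha] := cycles_span cyc.
exists (fun j => a j *: g); split => [j|r]; first by rewrite qformZl gp mulr0.
have -> : y r = qform g (y r *: u + z r) by rewrite qformDr qformZr gu mulr1 qformC zg addr0.
rewrite ha qform_sumr; apply: eq_bigr => j _; by rewrite qformZl qformZr.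
Qed.

Definition stage0 : stage := @Stage 0 1 (fun _ _ => 0).

Definition stage_at i := iter i next_stage stage0.

Lemma stage_perp_onto i : perp_onto (stage_at i).
Proof.
elim: i => [p y|i IH]; last exact: next_stage_perp_onto.
by exists (fun _ => 0); split => [r|[]//]; rewrite qform0l.
Qed.

End LinearResolution.
Arguments dcoef {k m} s.

Section KeelIdeal.
Variables (k : fieldType) (n : nat).
Local Notation P := (KPoly k n).
Local Notation I := (@keel_ideal k n).
Implicit Types p r : P.

Lemma keel_ideal0 : I 0.
Proof. by exists [::]; rewrite big_nil. Qed.

Lemma keel_idealD p r : I p -> I r -> I (p + r).
Proof.
case=> s1 [h1 ->] [s2 [h2 ->]]; exists (s1 ++ s2); split; last by rewrite big_cat.
by move=> x; rewrite mem_cat => /orP[/h1|/h2].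
Qed.

Lemma keel_idealMl r p : I p -> I (r * p).
Proof.
case=> s [h ->]; exists [seq (r * x.1, x.2) | x <- s]; split.
  by move=> x /mapP [y /h hy ->].
by rewrite big_map mulr_sumr; apply: eq_bigr => x _; rewrite mulrA.
Qed.

Lemma keel_idealMr r p : I p -> I (p * r).
Proof. by rewrite mulrC; apply: keel_idealMl. Qed.

Lemma keel_idealN p : I p -> I (- p).
Proof. by rewrite -mulN1r; apply: keel_idealMl. Qed.

Lemma keel_idealB p r : I p -> I r -> I (p - r).
Proof. by move=> hp /keel_idealN; apply: keel_idealD. Qed.

Lemma keel_idealZ c p : I p -> I (c *: p).
Proof. by rewrite -mul_mpolyC; apply: keel_idealMl. Qed.

Lemma keel_ideal_sum (J : Type) (s : seq J) (Q : pred J) (F : J -> P) :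
  (forall j, Q j -> I (F j)) -> I (\sum_(j <- s | Q j) F j).
Proof.
by move=> h; elim/big_rec: _ => [|j x /h]; [exact: keel_ideal0 | exact: keel_idealD].
Qed.

Lemma keel_idealW p : keel_gen p -> I p.
Proof.
move=> h; exists [:: (1, p)]; rewrite big_seq1 mul1r; split => //.
by move=> x; rewrite inE => /eqP ->.
Qed.

Lemma keel_ideal_invalid S : ~~ keel_valid S -> I (D k S).
Proof. by move=> h; apply/keel_idealW/Or41; exists S. Qed.

Lemma keel_ideal_setC S : I (D k S - D k (~: S)).
Proof. by apply/keel_idealW/Or42; exists S. Qed.

Lemma keel_ideal_incompat S T : keel_valid S -> keel_valid T ->
  ~~ keel_compat S T -> I (D k S * D k T).
Proof. by move=> vS vT hST; apply/keel_idealW/Or44; exists S, T. Qed.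

End KeelIdeal.

Lemma keel_valid_setC n (S : {set 'I_n}) : keel_valid (~: S) = keel_valid S.
Proof. by rewrite /keel_valid setCK andbC. Qed.

Lemma keel_compat_setCl n (S T : {set 'I_n}) : keel_compat (~: S) T = keel_compat S T.
Proof.
rewrite /keel_compat subCset subsetC !setCS.
by case: (S \subset T); case: (T \subset S); case: (S \subset ~: T); case: (~: T \subset S).
Qed.

Lemma keel_compat_setCr n (S T : {set 'I_n}) : keel_compat S (~: T) = keel_compat S T.
Proof.
rewrite /keel_compat !setCK.
by case: (S \subset T); case: (T \subset S); case: (S \subset ~: T); case: (~: T \subset S).
Qed.

Definition i0 : 'I_5 := @Ordinal 5 0 isT.
Definition i1 : 'I_5 := @Ordinal 5 1 isT.
Definition i2 : 'I_5 := @Ordinal 5 2 isT.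
Definition i3 : 'I_5 := @Ordinal 5 3 isT.
Definition i4 : 'I_5 := @Ordinal 5 4 isT.

Variant ord5_spec : 'I_5 -> Prop :=
  | Ord5_0 : ord5_spec i0 | Ord5_1 : ord5_spec i1 | Ord5_2 : ord5_spec i2
  | Ord5_3 : ord5_spec i3 | Ord5_4 : ord5_spec i4.

Lemma ord5P x : ord5_spec x.
Proof.
by case: x => [[|[|[|[|[|?]]]]] hx] //; rewrite (bool_irrelevance hx isT); constructor.
Qed.

Lemma card_setC5 (S : {set 'I_5}) : #|~: S| = (5 - #|S|)%N.
Proof. by rewrite cardsCs card_ord setCK. Qed.

Lemma keel_valid5 (S : {set 'I_5}) : keel_valid S = (#|S| == 2%N) || (#|S| == 3%N).
Proof. by rewrite /keel_valid card_setC5; have := max_card (mem S); rewrite card_ord; lia. Qed.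

Lemma keel_valid_pair (a b : 'I_5) : a != b -> keel_valid [set a; b].
Proof. by move=> ab; rewrite keel_valid5 cards2 ab. Qed.

Lemma uniq4P (i j k' l : 'I_5) : uniq [:: i; j; k'; l] <->
  [/\ [/\ i != j, i != k' & i != l], [/\ j != k' & j != l] & k' != l].
Proof.
rewrite /= !inE !negb_or; split.
  by move=> /andP[/andP[ij /andP[ik il]] /andP[/andP[jk jl] /andP[kl _]]].
by case=> [[-> -> ->] [-> ->] ->].
Qed.

Lemma uniq5P (i j k' l x : 'I_5) : uniq [:: i; j; k'; l; x] ->
  [/\ [/\ i != j, i != k', i != l & i != x], [/\ j != k', j != l & j != x],
      [/\ k' != l & k' != x] & l != x].
Proof.
rewrite /= !inE !negb_or => /andP[/andP[ij /andP[ik /andP[il ix]]]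
  /andP[/andP[jk /andP[jl jx]] /andP[/andP[kl kx] /andP[lx _]]]].
by do !split.
Qed.

Lemma uniq4_swap23 (i j k' l : 'I_5) : uniq [:: i; j; k'; l] -> uniq [:: i; k'; j; l].
Proof.
move/uniq4P => [[ij ik il] [jk jl] kl]; apply/uniq4P.
by rewrite ij ik il jl kl eq_sym jk.
Qed.

Lemma uniq4_swap34 (i j k' l : 'I_5) : uniq [:: i; j; k'; l] -> uniq [:: i; j; l; k'].
Proof.
move/uniq4P => [[ij ik il] [jk jl] kl]; apply/uniq4P.
by rewrite ij ik il jl jk eq_sym kl.
Qed.

Lemma incompat_pair (a b d : 'I_5) : uniq [:: a; b; d] ->
  ~~ keel_compat [set a; b] [set a; d].
Proof.
rewrite /= !inE negb_or => /andP[/andP[ab ad] /andP[bd _]].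
apply/or4P; case.
- move/subsetP/(_ b); rewrite !inE eqxx orbT => /(_ isT).
  by rewrite (eq_sym b) (negbTE ab) (negbTE bd).
- move/subsetP/(_ d); rewrite !inE eqxx orbT => /(_ isT).
  by rewrite !(eq_sym d) (negbTE ad) (negbTE bd).
- by move/subsetP/(_ a); rewrite !inE eqxx => /(_ isT).
- by move/subset_leq_card; rewrite card_setC5 !cards2 ab ad.
Qed.

(* With five points, [S] lies between [[set i; j]] (two points) and
   [~: [set k'; l]] (three points). *)
Lemma keel_sum_support (i j k' l : 'I_5) (S : {set 'I_5}) : uniq [:: i; j; k'; l] ->
  [&& i \in S, j \in S, k' \notin S & l \notin S] =
  (S == [set i; j]) || (S == ~: [set k'; l]).
Proof.
case/uniq4P => [[ij ik il] [jk jl] kl].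
apply/and4P/orP => [[iS jS kS lS]|[]/eqP->]; last 2 first.
- by split; rewrite !inE ?eqxx ?orbT // negb_or; apply/andP; split; rewrite eq_sym.
- by split; rewrite !inE ?eqxx ?orbT // negb_or; apply/andP; split.
have sub_ij : [set i; j] \subset S by rewrite subUset !sub1set iS jS.
have sub_kl : S \subset ~: [set k'; l].
  by rewrite subsetC subUset !sub1set !inE kS lS.
case: (leqP #|S| 2) => hS; [left | right].
  by rewrite eq_sym eqEcard sub_ij cards2 ij.
by rewrite eqEcard sub_kl card_setC5 cards2 kl.
Qed.

Section FivePointRelations.
Variable k : fieldType.
Local Notation I := (@keel_ideal k 5).
Local Notation D := (D k).
Local Notation Dp a b := (D [set a; b]).

Lemma keel_sum5 (i j k' l : 'I_5) : uniq [:: i; j; k'; l] ->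
  keel_sum k i j k' l = Dp i j + D (~: [set k'; l]).
Proof.
move=> u; have [[ij ik il] [jk jl] kl] := (uniq4P i j k' l).1 u.
have ne : [set i; j] != ~: [set k'; l].
  apply/negP => /eqP /(congr1 (fun X : {set 'I_5} => #|X|)).
  by rewrite card_setC5 !cards2 ij kl.
rewrite /keel_sum (bigD1 [set i; j]) /=; last by rewrite keel_sum_support // eqxx.
rewrite (bigD1 (~: [set k'; l])) /=; last by rewrite keel_sum_support // eqxx orbT eq_sym ne.
rewrite big1 ?addr0 // => S /andP[/andP[+ h1] h2]; rewrite keel_sum_support //.
by rewrite (negbTE h1) (negbTE h2).
Qed.

Lemma keel_rel_pairs (i j k' l : 'I_5) : uniq [:: i; j; k'; l] ->
  I (Dp i j + Dp k' l - (Dp i k' + Dp j l)).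
Proof.
move=> u; have g : I (keel_sum k i j k' l - keel_sum k i k' j l).
  by apply/keel_idealW/Or43; exists i, j, k', l; split => //; left.
rewrite (keel_sum5 u) (keel_sum5 (uniq4_swap23 u)) in g.
have := keel_idealB (keel_idealD g (keel_ideal_setC k [set k'; l]))
  (keel_ideal_setC k [set j; l]).
by congr keel_ideal; ring.
Qed.

End FivePointRelations.

Section DivisorClasses.
Variable k : fieldType.
Local Notation V := 'rV[k]_5.

(* [M_{0,5}] is the blow-up of the plane in four points.  In the basis
   [e i4 = H], [e a = E_a] (a < 4) of its Picard group the intersection form
   is [qform wt5], and [D^{a,4} = E_a], [D^{a,b} = H - E_c - E_d] for
   [{a,b,c,d} = {0,1,2,3}]; [hbar] is [H - E_0 - E_1 - E_2 - E_3]. *)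
Definition wt5 (c : 'I_5) : k := if c == i4 then 1 else -1.
Local Notation q := (qform wt5).

Lemma wt5_neq0 c : wt5 c != 0.
Proof. by rewrite /wt5; case: ifP => _; rewrite ?oppr_eq0 oner_eq0. Qed.

Definition e (c : 'I_5) : V := delta_mx 0 c.
Definition hbar : V := e i4 - \sum_(x | x != i4) e x.
Definition beta (x : 'I_5) : V := if x == i4 then - hbar else e x.
Definition pair_part (S : {set 'I_5}) := if #|S| == 2%N then S else ~: S.
Definition cls (S : {set 'I_5}) : V :=
  if keel_valid S then hbar + \sum_(x in pair_part S) beta x else 0.

Lemma qform_e x y : q (e x) (e y) = if x == y then wt5 x else 0.
Proof.
rewrite qform_delta /e mxE eqxx /= eq_sym.
by case: eqP => [->|_]; rewrite ?mulr1 ?mulr0.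
Qed.

Lemma qform_e_hbar x : q (e x) hbar = 1.
Proof.
rewrite /hbar qformDr qformNr qform_sumr qform_e.
have [->|hx] := eqVneq x i4.
  rewrite big1 ?subr0 => [|y hy]; first by rewrite /wt5 eqxx.
  by rewrite qform_e eq_sym (negbTE hy).
rewrite (bigD1 x) //= qform_e eqxx big1 ?addr0 => [|y /andP[_ hy]].
  by rewrite /wt5 (negbTE hx) sub0r opprK.
by rewrite qform_e eq_sym (negbTE hy).
Qed.

Lemma qform_hbar_hbar : q hbar hbar = -3%:R.
Proof.
rewrite {1}/hbar qformDl qformNl qform_suml qform_e_hbar.
under eq_bigr do rewrite qform_e_hbar.
by rewrite sumr_const cardC1 card_ord /=; ring.
Qed.

Lemma qform_hbar_beta x : q hbar (beta x) = if x == i4 then 3%:R else 1.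
Proof.
rewrite /beta; case: ifP => _; last by rewrite qformC qform_e_hbar.
by rewrite qformNr qform_hbar_hbar opprK.
Qed.

Lemma qform_beta x y : q (beta x) (beta y) =
  if x == y then (if x == i4 then -3%:R else -1)
  else (if (x == i4) || (y == i4) then -1 else 0).
Proof.
rewrite /beta; case: (x =P i4) => [->|/eqP hx]; case: (y =P i4) => [->|/eqP hy] /=.
- by rewrite qformNl qformNr opprK qform_hbar_hbar.
- by rewrite eq_sym (negbTE hy) qformNl qformC qform_e_hbar.
- by rewrite (negbTE hx) qformNr qform_e_hbar.
- by rewrite qform_e /wt5 (negbTE hx); case: (x == y).
Qed.

Lemma cls_pair (a b : 'I_5) : a != b -> cls [set a; b] = hbar + beta a + beta b.
Proof.
move=> ab; rewrite /cls keel_valid_pair // /pair_part cards2 ab /=.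
by rewrite big_setU1 ?inE //= big_set1 addrA.
Qed.

Lemma pair_partC (S : {set 'I_5}) : keel_valid S -> pair_part (~: S) = pair_part S.
Proof.
by rewrite keel_valid5 /pair_part card_setC5 setCK; case/orP => /eqP ->.
Qed.

Lemma cls_setC (S : {set 'I_5}) : cls (~: S) = cls S.
Proof. by rewrite /cls keel_valid_setC; case: ifP => // vS; rewrite pair_partC. Qed.

Lemma card_pair_part (S : {set 'I_5}) : keel_valid S -> #|pair_part S| = 2%N.
Proof.
rewrite keel_valid5 /pair_part => /orP[]/eqP hS; rewrite hS //=.
by rewrite card_setC5 hS.
Qed.

Lemma cls_pair_part (S : {set 'I_5}) : cls (pair_part S) = cls S.
Proof. by rewrite /pair_part; case: ifP => // _; rewrite cls_setC. Qed.

Lemma keel_compat_pair_part (S T : {set 'I_5}) :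
  keel_compat (pair_part S) (pair_part T) = keel_compat S T.
Proof.
rewrite /pair_part; case: ifP => _; case: ifP => _;
  by rewrite ?keel_compat_setCl ?keel_compat_setCr.
Qed.

Lemma incompat_pairs_share (a b c d : 'I_5) : a != b ->
  ~~ keel_compat [set a; b] [set c; d] ->
  exists x y z, [/\ uniq [:: x; y; z], [set a; b] = [set x; y] & [set c; d] = [set x; z]].
Proof.
move=> ab hc.
have pick (x u v : 'I_5) : x \in [set u; v] -> exists y, [set u; v] = [set x; y].
  by rewrite !inE => /orP[]/eqP->; [exists v | exists u; rewrite setUC].
have [x xab xcd] : exists2 x, x \in [set a; b] & x \in [set c; d].
  move: hc; rewrite /keel_compat !negb_or => /and4P[_ _ /subsetPn[x xab xcd] _].
  by exists x; rewrite // -[_ \in _]negbK -in_setC.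
have [y exy] := pick _ _ _ xab; have [z exz] := pick _ _ _ xcd.
exists x, y, z; split => //; rewrite /= !inE negb_or andbT -andbA; apply/and3P; split.
- apply: contraNneq ab => eyx; move: (set21 a b) (set22 a b).
  by rewrite exy -eyx setUid !inE => /eqP-> /eqP->.
- apply: contraNneq hc => ezx.
  by rewrite exy exz -ezx setUid /keel_compat sub1set set21 orbT.
- by apply: contraNneq hc => eyz; rewrite exy exz eyz /keel_compat subxx.
Qed.

Lemma qform_pairs_share (x y z : 'I_5) : uniq [:: x; y; z] ->
  q (hbar + beta x + beta y) (hbar + beta x + beta z) = 0.
Proof.
rewrite /= !inE negb_or andbT => /andP[/andP [xy xz] yz].
have expand (u a b c : V) : q (u + a + b) (u + a + c) =
    q u u + q u a + q u c + q u a + q a a + q a c + q u b + q b a + q b c.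
  by rewrite !(qformDl, qformDr) !(qformC wt5 _ u); ring.
rewrite expand !qform_hbar_beta !qform_beta.
rewrite qform_hbar_hbar eqxx (negbTE xz) (eq_sym y x) (negbTE xy) (negbTE yz).
case: (x =P i4) => [ex|_]; case: (y =P i4) => [ey|_]; case: (z =P i4) => [ez|_];
  rewrite /= ?orbT ?orbF; try ring.
all: by subst; rewrite ?eqxx in xy xz yz.
Qed.

Lemma qform_cls_incompat (S T : {set 'I_5}) : keel_valid S -> keel_valid T ->
  ~~ keel_compat S T -> q (cls S) (cls T) = 0.
Proof.
move=> vS vT; rewrite -keel_compat_pair_part -(cls_pair_part S) -(cls_pair_part T).
have /cards2P [a [b [ab ->]]] : #|pair_part S| == 2%N by rewrite card_pair_part.
have /cards2P [c [d [cd ->]]] : #|pair_part T| == 2%N by rewrite card_pair_part.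
move=> /(incompat_pairs_share ab) [x [y [z [u -> ->]]]].
move: (u); rewrite /= !inE negb_or andbT => /andP[/andP [xy xz] _].
by rewrite !cls_pair // qform_pairs_share.
Qed.

End DivisorClasses.

Section KeelEvaluation.
Variable k : fieldType.
Local Notation A := (qalg (wt5 k)).
Local Notation P := (KPoly k 5).

Definition qalg_const (c : k) : A := (c, 0, 0).

Fact qalg_const_is_zmod_morphism : zmod_morphism qalg_const.
Proof. by move=> a b; congr (_, _, _); rewrite subrr. Qed.
HB.instance Definition _ := GRing.isZmodMorphism.Build k A qalg_const
  qalg_const_is_zmod_morphism.

Fact qalg_const_is_monoid_morphism : monoid_morphism qalg_const.
Proof.
split=> // a b; rewrite /qalg_const qalg_mulE /= !scaler0 addr0 qform0l.
by rewrite !mulr0 !addr0.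
Qed.
HB.instance Definition _ := GRing.isMonoidMorphism.Build k A qalg_const
  qalg_const_is_monoid_morphism.

Definition keel_cls (i : 'I_(keel_nvar 5)) : A := (0, cls k (enum_val i), 0).
Definition keel_eval (p : P) : A := mmap qalg_const keel_cls p.

Lemma keel_evalD p r : keel_eval (p + r) = keel_eval p + keel_eval r.
Proof. exact: rmorphD. Qed.

Lemma keel_evalB p r : keel_eval (p - r) = keel_eval p - keel_eval r.
Proof. exact: rmorphB. Qed.

Lemma keel_evalM p r : keel_eval (p * r) = keel_eval p * keel_eval r.
Proof. exact: rmorphM. Qed.

Lemma keel_eval_sum (J : Type) (s : seq J) (Q : pred J) (F : J -> P) :
  keel_eval (\sum_(j <- s | Q j) F j) = \sum_(j <- s | Q j) keel_eval (F j).
Proof. exact: rmorph_sum. Qed.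

Lemma keel_eval_D (S : {set 'I_5}) : keel_eval (D k S) = (0, cls k S, 0).
Proof. by rewrite /keel_eval /D mmapX mmap1U /keel_cls enum_rankK. Qed.

Lemma keel_eval_C c : keel_eval c%:MP = (c, 0, 0).
Proof. exact: mmapC. Qed.

Lemma keel_evalZ c p : keel_eval (c *: p) = qalg_const c * keel_eval p.
Proof. exact: mmapZ. Qed.

Lemma keel_eval_gen p : keel_gen p -> keel_eval p = 0.
Proof.
case.
- by case=> S [vS ->]; rewrite keel_eval_D /cls (negbTE vS).
- by case=> S ->; rewrite keel_evalB !keel_eval_D cls_setC subrr.
- case=> i [j [k' [l [u h]]]].
  have u' := uniq4_swap23 u; have u'' := uniq4_swap23 (uniq4_swap34 u).
  have [[ij ik il] [jk jl] kl] := (uniq4P i j k' l).1 u.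
  case: h => ->; rewrite keel_evalB !keel_sum5 // !keel_evalD !keel_eval_D !cls_setC;
    rewrite !cls_pair //; (try by rewrite eq_sym); apply/eqP;
    rewrite subr_eq0 !qalg_addE; apply/eqP;
    by congr (_, _, _); apply/rowP => t; rewrite !mxE; ring.
- case=> S [T [vS vT hST ->]]; rewrite keel_evalM !keel_eval_D qalg_mulE /=.
  by rewrite qform_cls_incompat // !scale0r !mul0r !addr0.
Qed.

Lemma keel_eval_ideal p : keel_ideal p -> keel_eval p = 0.
Proof.
case=> s [hs ->]; rewrite keel_eval_sum big1_seq // => x /andP[_ /hs hx].
by rewrite keel_evalM (keel_eval_gen hx) mulr0.
Qed.

Lemma keel_eval_const p : (keel_eval p).1.1 = p@_0.
Proof.
have fst_prod (J : Type) (r : seq J) (F : J -> A) :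
    (\prod_(j <- r) F j).1.1 = \prod_(j <- r) (F j).1.1.
  by elim/big_rec2: _ => // j x y _ <-.
have fst_exp (x : A) e : (x ^+ e).1.1 = x.1.1 ^+ e.
  by elim: e => // e IH; rewrite !exprS -IH.
have fst_mon (mn : 'X_{1..keel_nvar 5}) : (keel_eval 'X_[mn]).1.1 = (mn == 0%MM)%:R.
  rewrite /keel_eval mmapX /mmap1 fst_prod.
  under eq_bigr do rewrite fst_exp /= expr0n.
  case: (pickP (fun i => mn i != 0%N)) => [i mi|mn0].
    rewrite (bigD1 i) //= (negbTE mi) mul0r; case: eqP => // e0.
    by move: mi; rewrite e0 mnm0E.
  have -> : mn = 0%MM by apply/mnmP => i; rewrite mnm0E; apply/eqP/negbFE/mn0.
  by rewrite eqxx big1 // => i _; rewrite mnm0E.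
elim/mpolyind: p => [|c mn p _ _ IH]; first by rewrite /keel_eval rmorph0 mcoeff0.
by rewrite keel_evalD keel_evalZ mcoeffD mcoeffZ mcoeffX -IH -fst_mon.
Qed.

End KeelEvaluation.

Lemma sum_neq_i4 (M : nmodType) (F : 'I_5 -> M) :
  \sum_(x | x != i4) F x = F i0 + F i1 + F i2 + F i3.
Proof.
rewrite (bigD1 i0) // (bigD1 i1) // (bigD1 i2) // (bigD1 i3) // big1 => [|x].
  by rewrite /= addr0 !addrA.
by case: (ord5P x).
Qed.

Section KeelProducts.
Variable k : fieldType.
Local Notation P := (KPoly k 5).
Local Notation I := (@keel_ideal k 5).
Local Notation Dp a b := (D k [set a; b]).

Lemma Dpair_incompat (a b d : 'I_5) : uniq [:: a; b; d] -> I (Dp a b * Dp a d).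
Proof.
move=> u; have := u; rewrite /= !inE negb_or andbT => /andP[/andP[ab ad] _].
by apply: keel_ideal_incompat; rewrite ?keel_valid_pair // incompat_pair.
Qed.

Lemma Dpair_incompat_r (a b d : 'I_5) : uniq [:: a; b; d] -> I (Dp b a * Dp d a).
Proof. by move=> u; rewrite !(setUC [set _] [set a]); apply: Dpair_incompat. Qed.

Lemma Dpair_mul_shift (a b c d x : 'I_5) : uniq [:: a; b; c; d; x] ->
  I (Dp a b * Dp c d - Dp a b * Dp c x).
Proof.
move=> u; have [[ab ac ad ax] [bc bd bx] [cd cx] dx] := uniq5P u.
have r : I (Dp c d + Dp x a - (Dp c x + Dp d a)).
  by apply: keel_rel_pairs; apply/uniq4P; rewrite cd cx eq_sym ac dx !(eq_sym _ a) ad ax.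
have abx : I (Dp a b * Dp a x) by apply: Dpair_incompat; rewrite /= !inE negb_or ab ax bx.
have abd : I (Dp a b * Dp a d) by apply: Dpair_incompat; rewrite /= !inE negb_or ab ad bd.
have := keel_idealD (keel_idealB (keel_idealMl (Dp a b) r) abx) abd.
by congr keel_ideal; rewrite !(setUC [set _] [set a]); ring.
Qed.

Lemma Dpair_sqr (a b j l : 'I_5) : uniq [:: a; b; j; l] ->
  I (Dp a b * Dp a b + Dp a b * Dp j l).
Proof.
move=> u; have [[ab aj al] [bj bl] jl] := (uniq4P a b j l).1 u.
have abj : I (Dp a b * Dp a j) by apply: Dpair_incompat; rewrite /= !inE negb_or ab aj bj.
have abl : I (Dp a b * Dp b l).
  by rewrite (setUC [set a]); apply: Dpair_incompat; rewrite /= !inE negb_or eq_sym ab bl al.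
have := keel_idealD (keel_idealD (keel_idealMl (Dp a b) (keel_rel_pairs k u)) abj) abl.
by congr keel_ideal; ring.
Qed.

(* Representatives of the point class, of the line class
   [H = D^{0,1} + E_2 + E_3] and of the basis vectors [e c]. *)
Definition keel_point : P := Dp i0 i1 * Dp i2 i3.
Definition keel_line : P := Dp i0 i1 + Dp i2 i4 + Dp i3 i4.
Definition keel_basis (c : 'I_5) : P := if c == i4 then keel_line else Dp c i4.

Lemma Dpair_i4_mul_point :
  [/\ I (Dp i0 i4 * Dp i2 i3 - keel_point), I (Dp i1 i4 * Dp i2 i3 - keel_point),
      I (Dp i2 i4 * Dp i0 i1 - keel_point) & I (Dp i3 i4 * Dp i0 i1 - keel_point)].
Proof.
split.
- have := Dpair_mul_shift (isT : uniq [:: i2; i3; i0; i4; i1]).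
  by congr keel_ideal; rewrite /keel_point; ring.
- have := Dpair_mul_shift (isT : uniq [:: i2; i3; i1; i4; i0]).
  by congr keel_ideal; rewrite /keel_point (setUC [set i1] [set i0]); ring.
- have := Dpair_mul_shift (isT : uniq [:: i0; i1; i2; i4; i3]).
  by congr keel_ideal; rewrite /keel_point; ring.
- have := Dpair_mul_shift (isT : uniq [:: i0; i1; i3; i4; i2]).
  by congr keel_ideal; rewrite /keel_point (setUC [set i3] [set i2]); ring.
Qed.

Lemma Dpair_i4_sqr a : a != i4 -> I (Dp a i4 * Dp a i4 + keel_point).
Proof.
have [t0 t1 t2 t3] := Dpair_i4_mul_point.
case: (ord5P a) => // _.
- have := keel_idealB (Dpair_sqr (isT : uniq [:: i0; i4; i2; i3])) t0.
  by congr keel_ideal; ring.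
- have := keel_idealB (Dpair_sqr (isT : uniq [:: i1; i4; i2; i3])) t1.
  by congr keel_ideal; ring.
- have := keel_idealB (Dpair_sqr (isT : uniq [:: i2; i4; i0; i1])) t2.
  by congr keel_ideal; ring.
- have := keel_idealB (Dpair_sqr (isT : uniq [:: i3; i4; i0; i1])) t3.
  by congr keel_ideal; ring.
Qed.

Lemma line_mul_Dpair a : a != i4 -> I (keel_line * Dp a i4).
Proof.
have [_ _ t2 t3] := Dpair_i4_mul_point.
case: (ord5P a) => // _.
- have := keel_idealD (keel_idealD (Dpair_incompat (isT : uniq [:: i0; i1; i4]))
    (Dpair_incompat_r (isT : uniq [:: i4; i2; i0])))
    (Dpair_incompat_r (isT : uniq [:: i4; i3; i0])).
  by congr keel_ideal; rewrite /keel_line; ring.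
- have := keel_idealD (keel_idealD (Dpair_incompat (isT : uniq [:: i1; i0; i4]))
    (Dpair_incompat_r (isT : uniq [:: i4; i2; i1])))
    (Dpair_incompat_r (isT : uniq [:: i4; i3; i1])).
  by congr keel_ideal; rewrite /keel_line (setUC [set i1] [set i0]); ring.
- have := keel_idealD (keel_idealD t2 (Dpair_i4_sqr (isT : i2 != i4)))
    (Dpair_incompat_r (isT : uniq [:: i4; i3; i2])).
  by congr keel_ideal; rewrite /keel_line; ring.
- have := keel_idealD (keel_idealD t3 (Dpair_i4_sqr (isT : i3 != i4)))
    (Dpair_incompat_r (isT : uniq [:: i4; i2; i3])).
  by congr keel_ideal; rewrite /keel_line; ring.
Qed.

Lemma line_sqr : I (keel_line * keel_line - keel_point).
Proof.
have [_ _ t2 t3] := Dpair_i4_mul_point.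
have s01 := Dpair_sqr (isT : uniq [:: i0; i1; i2; i3]).
have s2 := Dpair_i4_sqr (isT : i2 != i4); have s3 := Dpair_i4_sqr (isT : i3 != i4).
have i23 := Dpair_incompat_r (isT : uniq [:: i4; i2; i3]).
have := keel_idealD (keel_idealD (keel_idealD s01 s2) s3)
  (keel_idealZ 2%:R (keel_idealD (keel_idealD t2 t3) i23)).
by congr keel_ideal; rewrite /keel_line /keel_point -mul_mpolyC rmorphMn rmorph1; ring.
Qed.

Lemma keel_basis_mul c d :
  I (keel_basis c * keel_basis d - (if c == d then wt5 k c else 0) *: keel_point).
Proof.
have line_basis a : a != i4 -> I (keel_basis i4 * keel_basis a).
  by move=> a4; rewrite /keel_basis eqxx (negbTE a4); apply: line_mul_Dpair.
case: (d =P c) => [<-|/eqP cd].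
  case: (d =P i4) => [->|/eqP d4]; rewrite eqxx.
    by rewrite /keel_basis /wt5 eqxx scale1r; exact: line_sqr.
  by rewrite /keel_basis /wt5 (negbTE d4) scaleN1r opprK; exact: Dpair_i4_sqr.
rewrite eq_sym (negbTE cd) scale0r subr0.
case: (c =P i4) cd => [-> d4|/eqP c4 cd]; first exact: line_basis.
case: (d =P i4) => [->|/eqP d4]; first by rewrite mulrC; exact: line_basis.
rewrite /keel_basis (negbTE c4) (negbTE d4); apply: Dpair_incompat_r.
by rewrite /= !inE negb_or !(eq_sym i4) c4 d4 eq_sym cd.
Qed.

Lemma keel_basis_mul_point c : I (keel_basis c * keel_point).
Proof.
rewrite /keel_basis /keel_point; case: (ord5P c) => /=.
- by rewrite mulrA; apply/keel_idealMr/(Dpair_incompat (isT : uniq [:: i0; i4; i1])).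
- rewrite mulrA (setUC [set i0] [set i1]); apply: keel_idealMr.
  exact: (Dpair_incompat (isT : uniq [:: i1; i4; i0])).
- by rewrite mulrCA; apply/keel_idealMl/(Dpair_incompat (isT : uniq [:: i2; i4; i3])).
- rewrite mulrCA (setUC [set i2] [set i3]); apply: keel_idealMl.
  exact: (Dpair_incompat (isT : uniq [:: i3; i4; i2])).
have t := Dpair_mul_shift (isT : uniq [:: i2; i3; i0; i1; i4]).
have i01 := Dpair_incompat (isT : uniq [:: i0; i1; i4]).
have i24 := Dpair_incompat (isT : uniq [:: i2; i4; i3]).
have i34 := Dpair_incompat (isT : uniq [:: i3; i4; i2]).
have := keel_idealD (keel_idealD (keel_idealD (keel_idealMl (Dp i0 i1) t)
  (keel_idealMl (Dp i2 i3) i01)) (keel_idealMl (Dp i0 i1) i24)) (keel_idealMl (Dp i0 i1) i34).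
by congr keel_ideal; rewrite /keel_line (setUC [set i3] [set i2]); ring.
Qed.

End KeelProducts.

Section KeelNormalForm.
Variable k : fieldType.
Local Notation V := 'rV[k]_5.
Local Notation A := (qalg (wt5 k)).
Local Notation q := (qform (wt5 k)).
Local Notation P := (KPoly k 5).
Local Notation I := (@keel_ideal k 5).
Local Notation Dp a b := (D k [set a; b]).
Local Notation keel_point := (keel_point k).
Local Notation keel_line := (keel_line k).
Local Notation keel_basis := (keel_basis k).

(* For [{a,b,c,d} = {0,1,2,3}], [line_rep a b = D^{a,b} + E_c + E_d] is
   another representative of the line class. *)
Definition line_rep (a b : 'I_5) : P :=
  Dp a b + \sum_(x | x != i4) Dp x i4 - Dp a i4 - Dp b i4.

Lemma line_repC a b : line_rep a b = line_rep b a.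
Proof. by rewrite /line_rep setUC; ring. Qed.

Lemma line_rep_step a b c : uniq [:: a; b; c; i4] -> I (line_rep a b - line_rep a c).
Proof. by move=> u; have := keel_rel_pairs k u; congr keel_ideal; rewrite /line_rep; ring. Qed.

Lemma line_rep_line a b : uniq [:: a; b; i4] -> I (line_rep a b - keel_line).
Proof.
have -> : keel_line = line_rep i0 i1 by rewrite /line_rep sum_neq_i4 /keel_line; ring.
have r01 : I (line_rep i0 i1 - line_rep i0 i1) by rewrite subrr; exact: keel_ideal0.
have r02 := line_rep_step (isT : uniq [:: i0; i2; i1; i4]).
have r03 := line_rep_step (isT : uniq [:: i0; i3; i1; i4]).
have r12 : I (line_rep i1 i2 - line_rep i0 i1).
  by rewrite (line_repC i0); exact: line_rep_step.
have r13 : I (line_rep i1 i3 - line_rep i0 i1).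
  by rewrite (line_repC i0); exact: line_rep_step.
have r23 : I (line_rep i2 i3 - line_rep i0 i1).
  have := keel_idealD (line_rep_step (isT : uniq [:: i2; i3; i0; i4])) r02.
  by congr keel_ideal; rewrite (line_repC i2 i0); ring.
case: (ord5P a); case: (ord5P b) => //= _;
  first [assumption | rewrite line_repC; assumption].
Qed.

Definition vlift (v : V) : P := \sum_c v 0 c *: keel_basis c.

Fact vlift_is_linear : linear vlift.
Proof.
move=> a x y; rewrite /vlift scaler_sumr -big_split /=.
by apply: eq_bigr => c _; rewrite !mxE scalerDl scalerA.
Qed.
HB.instance Definition _ := GRing.isLinear.Build k V P _ vlift vlift_is_linear.

Lemma vlift0 : vlift 0 = 0. Proof. exact: linear0. Qed.
Lemma vliftD x y : vlift (x + y) = vlift x + vlift y. Proof. exact: linearD. Qed.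
Lemma vliftN x : vlift (- x) = - vlift x. Proof. exact: linearN. Qed.
Lemma vliftB x y : vlift (x - y) = vlift x - vlift y. Proof. exact: linearB. Qed.
Lemma vliftZ a x : vlift (a *: x) = a *: vlift x. Proof. exact: linearZ. Qed.
Lemma vlift_sum (J : Type) (r : seq J) (Q : pred J) (F : J -> V) :
  vlift (\sum_(j <- r | Q j) F j) = \sum_(j <- r | Q j) vlift (F j).
Proof. exact: linear_sum. Qed.

Lemma vlift_e c : vlift (e k c) = keel_basis c.
Proof.
rewrite /vlift (bigD1 c) //= big1 ?addr0 => [|d dc]; first by rewrite mxE !eqxx scale1r.
by rewrite mxE (negbTE dc) andbF scale0r.
Qed.

Lemma vlift_hbar : vlift (hbar k) = keel_line - \sum_(x | x != i4) Dp x i4.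
Proof.
rewrite vliftB vlift_sum vlift_e /keel_basis eqxx; congr (_ - _).
by apply: eq_bigr => x x4; rewrite vlift_e /keel_basis (negbTE x4).
Qed.

Lemma vlift_beta x :
  vlift (beta k x) = if x == i4 then \sum_(x | x != i4) Dp x i4 - keel_line else Dp x i4.
Proof.
rewrite /beta; case: ifP => x4; first by rewrite vliftN vlift_hbar opprB.
by rewrite vlift_e /keel_basis x4.
Qed.

Lemma Dpair_vlift a b : a != b -> I (Dp a b - vlift (cls k [set a; b])).
Proof.
move=> ab; rewrite cls_pair // 2!vliftD vlift_hbar !vlift_beta.
case: (a =P i4) => [ea|/eqP a4] /=.
  rewrite ea in ab *; rewrite eq_sym (negbTE ab) (setUC [set i4]).
  by rewrite (_ : _ - _ = 0); [exact: keel_ideal0 | ring].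
case: (b =P i4) => [->|/eqP b4] /=.
  by rewrite (_ : _ - _ = 0); [exact: keel_ideal0 | ring].
have := line_rep_line (_ : uniq [:: a; b; i4]).
rewrite /= !inE negb_or ab a4 b4 => /(_ isT).
by congr keel_ideal; rewrite /line_rep; ring.
Qed.

Lemma D_vlift S : I (D k S - vlift (cls k S)).
Proof.
case vS: (keel_valid S); last first.
  by rewrite /cls vS vlift0 subr0; apply: keel_ideal_invalid; rewrite vS.
have pair (T : {set 'I_5}) : #|T| == 2%N -> I (D k T - vlift (cls k T)).
  by move=> /cards2P [a [b [ab ->]]]; apply: Dpair_vlift.
move: vS; rewrite keel_valid5 => /orP[/pair //|S3].
have := keel_idealD (keel_ideal_setC k S) (pair (~: S) _).
rewrite cls_setC card_setC5 (eqP S3) => /(_ isT).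
by congr keel_ideal; ring.
Qed.

Lemma vlift_mul x y : I (vlift x * vlift y - q x y *: keel_point).
Proof.
have -> : vlift x * vlift y =
    \sum_c \sum_d (x 0 c * y 0 d) *: (keel_basis c * keel_basis d).
  rewrite mulr_suml; apply: eq_bigr => c _; rewrite mulr_sumr; apply: eq_bigr => d _.
  by rewrite -scalerAl -scalerAr scalerA.
have -> : q x y *: keel_point = \sum_c \sum_d
    (x 0 c * y 0 d) *: ((if c == d then wt5 k c else 0) *: keel_point).
  rewrite /qform scaler_suml; apply: eq_bigr => c _.
  rewrite (bigD1 c) //= big1 => [|d dc]; last by rewrite eq_sym (negbTE dc) scale0r scaler0.
  by rewrite eqxx addr0 scalerA; congr (_ *: _); ring.
rewrite -sumrB; apply: keel_ideal_sum => c _; rewrite -sumrB.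
by apply: keel_ideal_sum => d _; rewrite -scalerBr; apply/keel_idealZ/keel_basis_mul.
Qed.

Lemma vlift_mul_point x : I (vlift x * keel_point).
Proof.
rewrite /vlift mulr_suml; apply: keel_ideal_sum => c _; rewrite -scalerAl.
exact/keel_idealZ/keel_basis_mul_point.
Qed.

Definition keel_lift (a : A) : P := a.1.1%:MP + vlift a.1.2 + a.2 *: keel_point.

Lemma keel_liftD a b : keel_lift (a + b) = keel_lift a + keel_lift b.
Proof.
case: a b => [[a0 v] c] [[b0 u] d]; rewrite /keel_lift /= mpolyCD vliftD scalerDl; ring.
Qed.

Lemma keel_lift0 : keel_lift 0 = 0.
Proof. by rewrite /keel_lift /= mpolyC0 vlift0 scale0r !addr0. Qed.

Lemma keel_lift1 : keel_lift 1 = 1.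
Proof. by rewrite qalg_oneE /keel_lift /= mpolyC1 vlift0 scale0r !addr0. Qed.

Lemma keel_lift_constM c a : keel_lift (qalg_const c * a) = c *: keel_lift a.
Proof.
case: a => [[a0 v] d]; rewrite qalg_mulE /keel_lift /= scaler0 addr0 qform0l addr0 mulr0 addr0.
by rewrite vliftZ mpolyCM -!mul_mpolyC mpolyCM; ring.
Qed.

Lemma X_mul_keel_lift i a : I ('X_i * keel_lift a - keel_lift (keel_cls k i * a)).
Proof.
set S := enum_val i; have XD : 'X_i = D k S by rewrite /D /S enum_valK.
case: a => [[a0 v] c]; rewrite /keel_cls -/S qalg_mulE /keel_lift /=.
rewrite scale0r add0r !mul0r add0r mulr0 !add0r vliftZ.
have DS := D_vlift S; rewrite -XD in DS.
have := keel_idealD (keel_idealD (keel_idealD (keel_idealD (keel_idealZ a0 DS)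
  (keel_idealMl (vlift v) DS)) (vlift_mul (cls k S) v))
  (keel_idealZ c (keel_idealMr keel_point DS))) (keel_idealZ c (vlift_mul_point (cls k S))).
by congr keel_ideal; rewrite -!mul_mpolyC; ring.
Qed.

Lemma keel_normal_form p : I (p - keel_lift (keel_eval p)).
Proof.
pose normal (p : P) := I (p - keel_lift (keel_eval p)).
have normalD p1 p2 : normal p1 -> normal p2 -> normal (p1 + p2).
  move=> h1 h2; rewrite /normal keel_evalD keel_liftD opprD addrACA.
  exact: keel_idealD h1 h2.
have normalZ c p1 : normal p1 -> normal (c *: p1).
  by move=> h1; rewrite /normal keel_evalZ keel_lift_constM -scalerBr; exact: keel_idealZ.
have normalX i p1 : normal p1 -> normal ('X_i * p1).
  move=> h1; rewrite /normal keel_evalM.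
  rewrite (_ : keel_eval 'X_i = keel_cls k i); last by rewrite /keel_eval mmapX mmap1U.
  have := keel_idealD (keel_idealMl 'X_i h1) (X_mul_keel_lift i (keel_eval p1)).
  by rewrite mulrBr addrA subrK.
have normal_mon mn : normal 'X_[mn].
  rewrite mpolyXE_id; elim/big_rec: _ => [|i x _ hx].
    by rewrite /normal /keel_eval rmorph1 keel_lift1 subrr; exact: keel_ideal0.
  elim: (mn i) => [|n IH]; first by rewrite expr0 mul1r.
  by rewrite exprS -mulrA; apply: normalX.
elim/mpolyind: p => [|c mn p _ _ IH].
  by rewrite /keel_eval rmorph0 keel_lift0 subrr; exact: keel_ideal0.
exact: normalD (normalZ c _ (normal_mon mn)) IH.
Qed.

Lemma keel_eval_eq0 p : keel_eval p = 0 <-> I p.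
Proof.
split=> [p0|]; last exact: keel_eval_ideal.
by have := keel_normal_form p; rewrite p0 keel_lift0 subr0.
Qed.

Lemma keel_eval_basis c : keel_eval (keel_basis c) = (0, e k c, 0).
Proof.
rewrite /keel_basis; case: ifP => [/eqP ->|c4].
  rewrite /keel_line !keel_evalD !keel_eval_D !cls_pair // !qalg_addE !addr0.
  congr (_, _, _); rewrite /beta eqxx /= /hbar sum_neq_i4.
  by apply/rowP => t; rewrite !mxE /=; ring.
rewrite keel_eval_D cls_pair ?c4 //; congr (_, _, _).
by rewrite /beta eqxx c4; apply/rowP => t; rewrite !mxE /=; ring.
Qed.

Lemma keel_eval_vlift v : keel_eval (vlift v) = (0, v, 0).
Proof.
rewrite /vlift keel_eval_sum.
under eq_bigr do rewrite keel_evalZ keel_eval_basis qalg_mul_deg1 /qalg_const /= qform0l.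
rewrite qalg_sumE /=; congr (_, _, _); [exact: big1 | | exact: big1].
exact/esym/row_sum_delta.
Qed.

Lemma vlift_homog v : vlift v \is 1.-homog.
Proof.
have D_homog S : D k S \is 1.-homog.
  by rewrite /D dhomogX; apply/mdeg1P; exists (enum_rank S).
rewrite rpred_sum // => c _; rewrite rpredZ // /keel_basis.
by case: ifP => _; rewrite /keel_line ?rpredD ?D_homog.
Qed.

End KeelNormalForm.

Section KeelResolution.
Variable k : fieldType.
Local Notation q := (qform (wt5 k)).
Local Notation P := (KPoly k 5).
Local Notation stage := (stage k 3).

Definition keel_mx (s : stage) : 'M[P]_(rank_out s, rank_in s) :=
  \matrix_(r, t) vlift (dcoef s r t).

Lemma keel_eval_mulmx (s : stage) (v : 'rV[P]_(rank_out s)) t :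
  keel_eval ((v *m keel_mx s) 0 t) =
  (0, \sum_r (keel_eval (v 0 r)).1.1 *: dcoef s r t,
      \sum_r q (keel_eval (v 0 r)).1.2 (dcoef s r t)).
Proof.
rewrite mxE keel_eval_sum.
under eq_bigr do rewrite mxE keel_evalM keel_eval_vlift qalg_mul_deg1.
by rewrite qalg_sumE /= big1.
Qed.

Lemma keel_mx_complex (s : stage) r t :
  keel_ideal ((keel_mx (next_stage (wt5 k) s) *m keel_mx s) r t).
Proof.
set M := keel_mx (next_stage (wt5 k) s).
have -> : (M *m keel_mx s) r t = (row r M *m keel_mx s) 0 t by rewrite -row_mul !mxE.
apply/keel_eval_eq0; rewrite keel_eval_mulmx.
under eq_bigr do rewrite mxE mxE keel_eval_vlift scale0r.
under [X in (_, _, X)]eq_bigr do rewrite mxE mxE keel_eval_vlift.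
by rewrite big1 // next_stage_complex.
Qed.

Lemma keel_exact (s : stage) : perp_onto (wt5 k) s ->
  forall v : 'rV[P]_(rank_out s),
  (forall r, (keel_eval (v 0 r)).1.1 = 0) ->
  (forall t, \sum_r q (keel_eval (v 0 r)).1.2 (dcoef s r t) = 0) ->
  exists w, vec_in_ideal (v - w *m keel_mx (next_stage (wt5 k) s)).
Proof.
move=> hs v v0 v1; have [a ha] := cycles_span v1.
have [z [_ hz]] := next_stage_perp_onto (@wt5_neq0 k) hs 0 (fun r => (keel_eval (v 0 r)).2).
pose u := \row_j ((a j)%:MP + vlift (z j)) : 'rV[P]_(rank_out (next_stage (wt5 k) s)).
have eu j : keel_eval (u 0 j) = (a j, z j, 0).
  by rewrite mxE keel_evalD keel_eval_C keel_eval_vlift qalg_addE add0r addr0 addr0.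
exists u => r; apply/keel_eval_eq0; rewrite 2!mxE keel_evalB keel_eval_mulmx.
under eq_bigr do rewrite eu.
under [X in (_, _, X)]eq_bigr do rewrite eu.
rewrite hz -ha; move: (v0 r); case: (keel_eval (v 0 r)) => [[a0 x] c] /= ->.
by rewrite subrr.
Qed.

End KeelResolution.

Theorem mainTheorem1 (k : fieldType) : keel_koszul k 5.
Proof.
pose s i := stage_at (wt5 k) i.
have perp i : perp_onto (wt5 k) (s i) := stage_perp_onto (@wt5_neq0 k) (i := i).
exists (fun i => rank_out (s i)), (const_mx 1), (fun i => keel_mx (s i.+1)); split.
- by apply/eqP => /rowP/(_ ord0)/eqP; rewrite !mxE oner_eq0.
- by move=> i r t; rewrite mxE vlift_homog.
- by move=> i r t; apply: keel_mx_complex.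
- move=> v; rewrite big_ord1 mxE mul1r => v0.
  apply: (keel_exact (perp 0)) => [[[|//] ?]|[]//].
  by rewrite keel_eval_const -v0; congr (v 0 _)@_0; exact: val_inj.
move=> i v dv.
have e t : keel_eval ((v *m keel_mx (s i.+1)) 0 t) = 0 := keel_eval_ideal (dv t).
apply: (keel_exact (perp i.+1)) => [|t]; last by move: (e t); rewrite keel_eval_mulmx; case.
by apply: next_stage_free => t; move: (e t); rewrite keel_eval_mulmx; case.
Qed.
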